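(* For every positive integer $h$ there exists $N$ such that if $G$ is a graph with $|V(G)|\ge N$ which is neither complete nor edgeless, then $G$ contains an induced subgraph $J$ such that $|V(J)|=h$ and either $J$ or $\bar J$ is a star or has exactly one edge.
   Context: All graphs are finite and simple; $\bar J$ denotes the complement of $J$; a star is a complete bipartite graph $K_{1,m}$. *)

(* A finite simple graph is a finType T of vertices with a
   symmetric irreflexive adjacency relation e : rel T. *)
From mathcomp Require Import all_boot.
Set Implicit Arguments. Unset Strict Implicit. Unset Printing Implicit Defensive.

Definition compl_rel (T : finType) (e : rel T) : rel T :=
  fun x y => (x != y) && ~~ e x y.

Definition induced_star (T : finType) (e : rel T) (S : {set T}) : Prop :=
  exists2 c, c \in S &
    forall x y, x \in S -> y \in S -> x != y -> (e x y <-> (x = c \/ y = c)).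

Definition induced_one_edge (T : finType) (e : rel T) (S : {set T}) : Prop :=
  exists a b, [/\ a \in S, b \in S, a != b, e a b &
    forall x y, x \in S -> y \in S -> e x y ->
      (x = a /\ y = b) \/ (x = b /\ y = a)].

From mathcomp Require Import all_boot zify.

(* By Ramsey's theorem a graph on 2^(6h) vertices contains a set I of 3h
   vertices that is independent in G or in its complement; replacing G by its
   complement we may assume the former, and G still has an edge xy.  If some
   vertex has h-1 neighbours in I, it is the centre of an induced star.
   Otherwise x and y each have fewer than h-1 neighbours in I, so h-2 vertices
   of I are adjacent to neither, and together with x and y they induce a graph
   whose only edge is xy. *)

Set Implicit Arguments. Unset Strict Implicit. Unset Printing Implicit Defensive.

Lemma compl_rel_sym (T : finType) (e : rel T) : symmetric e -> symmetric (compl_rel e).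
Proof. by move=> e_sym x y; rewrite /compl_rel eq_sym e_sym. Qed.

Lemma compl_rel_irr (T : finType) (e : rel T) : irreflexive (compl_rel e).
Proof. by move=> x; rewrite /compl_rel eqxx. Qed.

Lemma subset_of_card (T : finType) (A : {set T}) n :
  n <= #|A| -> exists2 B : {set T}, B \subset A & #|B| = n.
Proof.
case/card_geqP => s [s_uniq s_size sA]; exists [set x in s].
  by apply/subsetP => x; rewrite inE => /sA.
by rewrite cardsE (card_uniqP s_uniq) s_size.
Qed.

Section Independent.

Variables (T : finType) (r : rel T).
Hypotheses (r_sym : symmetric r) (r_irr : irreflexive r).

Definition independent (S : {set T}) := forall x y, x \in S -> y \in S -> ~~ r x y.

Lemma independentS (S1 S2 : {set T}) : S1 \subset S2 -> independent S2 -> independent S1.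
Proof. by move=> /subsetP sS12 indS2 x y /sS12 xS2 /sS12; apply: indS2. Qed.

Lemma independent_setU1 v (S : {set T}) :
  independent S -> {in S, forall u, ~~ r v u} -> independent (v |: S).
Proof.
move=> indS nvS x y; rewrite !inE => /predU1P [-> | xS] /predU1P [-> | yS].
- by rewrite r_irr.
- exact: nvS.
- by rewrite r_sym nvS.
- exact: indS.
Qed.

Lemma induced_star_setU1 c (K : {set T}) :
  independent K -> {in K, forall u, r c u} -> induced_star r (c |: K).
Proof.
move=> indK cK; have cNK : c \notin K by apply/negP => /cK; rewrite r_irr.
exists c; first exact: setU11.
move=> x y; rewrite !inE => /predU1P [-> | xK] /predU1P [-> | yK] xy.
- by rewrite eqxx in xy.
- by rewrite cK //; split=> // _; left.
- by rewrite r_sym cK //; split=> // _; right.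
rewrite (negbTE (indK _ _ xK yK)); split=> // -[] eqc.
  by rewrite -eqc xK in cNK.
by rewrite -eqc yK in cNK.
Qed.

Lemma induced_one_edge_setU2 a b (K : {set T}) :
  r a b -> independent K -> {in K, forall u, ~~ r a u && ~~ r b u} ->
  induced_one_edge r (a |: (b |: K)).
Proof.
move=> rab indK abK; have rN u : u \in K -> (r a u = false) * (r b u = false).
  by case/abK/andP => /negbTE-> /negbTE->.
exists a, b; split; rewrite ?inE ?eqxx ?orbT //.
  by apply: contraTneq rab => ->; rewrite r_irr.
move=> x y; rewrite !inE => /or3P [/eqP-> | /eqP-> | xK] /or3P [/eqP-> | /eqP-> | yK].
- by rewrite r_irr.
- by left.
- by rewrite rN.
- by right.
- by rewrite r_irr.
- by rewrite rN.
- by rewrite r_sym rN.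
- by rewrite r_sym rN.
- by rewrite (negbTE (indK _ _ xK yK)).
Qed.

Definition nbhd_in (A : {set T}) v := [set u in A | r v u].

Lemma star_of_large_nbhd h (I : {set T}) v :
  0 < h -> independent I -> h.-1 <= #|nbhd_in I v| ->
  exists S : {set T}, #|S| = h /\ induced_star r S.
Proof.
move=> h_gt0 indI /subset_of_card [K sK cardK].
have inK u : u \in K -> u \in I /\ r v u by move/(subsetP sK); rewrite inE => /andP.
have vK : v \notin K by apply: contraFN (r_irr v) => /inK [].
exists (v |: K); split; first by rewrite cardsU1 vK cardK; lia.
apply: induced_star_setU1 => [|u /inK [] //].
by apply: independentS indI; apply/subsetP => u /inK [].
Qed.

Lemma one_edge_of_small_nbhds h (I : {set T}) x y :
  r x y -> independent I -> 3 * h <= #|I| ->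
  #|nbhd_in I x| < h.-1 -> #|nbhd_in I y| < h.-1 ->
  exists S : {set T}, #|S| = h /\ induced_one_edge r S.
Proof.
move=> rxy indI cardI small_x small_y.
pose B := [set x; y] :|: (nbhd_in I x :|: nbhd_in I y).
have cardB : #|B| <= 2 + (#|nbhd_in I x| + #|nbhd_in I y|).
  by rewrite /B cardsU (cardsU (nbhd_in I x)) cards2; case: (x != y); lia.
have [K sK cardK] : exists2 K : {set T}, K \subset I :\: B & #|K| = h - 2.
  by apply: subset_of_card; rewrite cardsD; have := subset_leq_card (subsetIr I B); lia.
have inK u : u \in K -> [/\ u \in I, u != x, u != y, ~~ r x u & ~~ r y u].
  move/(subsetP sK); rewrite !inE.
  by case: (u \in I); case: (u == x); case: (u == y); case: (r x u); case: (r y u).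
have xy : x != y by apply: contraTneq rxy => ->; rewrite r_irr.
have xK : x \notin K by apply/negP => /inK [_]; rewrite eqxx.
have yK : y \notin K by apply/negP => /inK [_ _]; rewrite eqxx.
exists (x |: (y |: K)); split.
  by rewrite !cardsU1 !inE negb_or xy xK yK cardK; lia.
apply: induced_one_edge_setU2 => //; last by move=> u /inK [] _ _ _ -> ->.
by apply: independentS indI; apply/subsetP => u /inK [].
Qed.

End Independent.

Lemma ramsey_independent (T : finType) (e : rel T) :
  symmetric e -> irreflexive e -> forall a b (A : {set T}), 2 ^ (a + b) <= #|A| ->
  exists2 S : {set T}, S \subset A &
    (a <= #|S| /\ independent e S) \/ (b <= #|S| /\ independent (compl_rel e) S).
Proof.
move=> e_sym e_irr; elim=> [|a IHa] b A.
  by exists set0; rewrite ?sub0set //; left; split=> // x; rewrite inE.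
elim: b A => [|b IHb] A.
  by exists set0; rewrite ?sub0set //; right; split=> // x; rewrite inE.
move=> cardA; have /card_gt0P [v vA] : 0 < #|A|.
  by apply: leq_trans cardA; rewrite expn_gt0.
pose N := (A :\ v) :&: [set u | e v u]; pose M := (A :\ v) :\: [set u | e v u].
have cardA_NM : #|A| = (#|N| + #|M|).+1 by rewrite (cardsD1 v) vA cardsID.
have sMAv : M \subset A :\ v := subsetDl _ _.
have sNAv : N \subset A :\ v := subsetIl _ _.
have grow (S : {set T}) : S \subset A :\ v -> v |: S \subset A /\ #|v |: S| = #|S|.+1.
  move=> sS; rewrite subUset sub1set vA (subset_trans sS (subD1set _ _)).
  by rewrite cardsU1 (contra (subsetP sS v)) // !inE eqxx.
have [bigM | bigN] : 2 ^ (a + b.+1) <= #|M| \/ 2 ^ (a.+1 + b) <= #|N|.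
  by move: cardA; rewrite cardA_NM !addSn !addnS !expnS; lia.
- have [S sSM [[cS indS] | indS]] := IHa _ _ bigM; last first.
    exists S; last by right.
    exact: subset_trans sSM (subset_trans sMAv (subD1set _ _)).
  have [sA cardvS] := grow S (subset_trans sSM sMAv).
  exists (v |: S) => //; left; split; first by rewrite cardvS.
  apply: independent_setU1 => // u /(subsetP sSM); rewrite !inE; by case/andP.
- have [S sSN [indS | [cS indS]]] := IHb _ bigN.
    exists S; last by left.
    exact: subset_trans sSN (subset_trans sNAv (subD1set _ _)).
  have [sA cardvS] := grow S (subset_trans sSN sNAv).
  exists (v |: S) => //; right; split; first by rewrite cardvS.
  apply: independent_setU1 => //; first exact: compl_rel_sym.
    exact: compl_rel_irr.
  by move=> u /(subsetP sSN); rewrite !inE /compl_rel => /andP [_ ->]; rewrite andbF.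
Qed.

Lemma independent_star_or_one_edge (T : finType) (r : rel T) (h : nat) (I : {set T}) :
  symmetric r -> irreflexive r -> 0 < h -> independent r I -> 3 * h <= #|I| ->
  (exists x y, r x y) ->
  exists S : {set T}, #|S| = h /\ (induced_star r S \/ induced_one_edge r S).
Proof.
move=> r_sym r_irr h_gt0 indI cardI [x [y rxy]].
case: (boolP [exists v, h.-1 <= #|nbhd_in r I v|]) =>
  [/existsP [v big_v] | /existsPn small].
  have [S [cardS star]] := star_of_large_nbhd r_sym r_irr h_gt0 indI big_v.
  by exists S; split; [|left].
have {}small v : #|nbhd_in r I v| < h.-1 by rewrite ltnNge small.
have [S [cardS edge]] :=
  one_edge_of_small_nbhds r_sym r_irr rxy indI cardI (small x) (small y).
by exists S; split; [|right].
Qed.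

Theorem lemma3p8 :
  forall h : nat, 0 < h ->
  exists N : nat,
    forall (T : finType) (e : rel T),
      symmetric e -> irreflexive e ->
      N <= #|T| ->
      (exists x y : T, x != y /\ ~~ e x y) ->
      (exists x y : T, e x y) ->
      exists S : {set T}, #|S| = h /\
        (induced_star e S \/ induced_star (compl_rel e) S \/
         induced_one_edge e S \/ induced_one_edge (compl_rel e) S).
Proof.
move=> h h_gt0; exists (2 ^ (3 * h + 3 * h)) => T e e_sym e_irr cardT.
move=> [x [y [xy nexy]]] e_edge; rewrite -cardsT in cardT.
have [I _ [[cardI indI] | [cardI indI]]] := ramsey_independent e_sym e_irr cardT.
- have [S [cardS [star | edge]]] :=
    independent_star_or_one_edge e_sym e_irr h_gt0 indI cardI e_edge.
  + by exists S; split; [|left].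
  + by exists S; split; [|right; right; left].
- have ce_edge : exists x y, compl_rel e x y by exists x, y; rewrite /compl_rel xy.
  have [S [cardS [star | edge]]] := independent_star_or_one_edge
    (compl_rel_sym e_sym) (@compl_rel_irr _ e) h_gt0 indI cardI ce_edge.
  + by exists S; split; [|right; left].
  + by exists S; split; [|right; right; right].
Qed.
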